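(* Let $M,N,d$ be positive integers. For $i=1,\dots,M$, $j=1,\dots,N$ let $x_{ij}\in\mathbb{R}^d$, $y_{ij}\in\{+1,-1\}$, with the points drawn from a continuous (absolutely continuous) distribution and the dataset satisfying: each $C_i=\{w:\ y_{ij}x_{ij}^Tw\ge1,\ j=1,\dots,N\}$ is nonempty and $\bar C=\bigcap_{i=1}^MC_i\neq\emptyset$. For $\lambda>0$ let $w_0^K=w_0^K(\lambda)$ be the Local-GD iterates: $w_0^0=0$, $w_i^{k+1}=\arg\min_{w}\sum_{j=1}^N\exp(-y_{ij}x_{ij}^Tw)+\frac\lambda2\|w-w_0^k\|^2$, $w_0^{k+1}=\frac1M\sum_{i=1}^Mw_i^{k+1}$. Then, for almost all such datasets, there exists a point $\bar w\in\bar C$ such that $$\lim_{K\to\infty}\lim_{\lambda\to0}\frac{w_0^K(\lambda)}{\|w_0^K(\lambda)\|}=\frac{\bar w}{\|\bar w\|},$$ i.e. the Local-GD global model converges in direction to a point of $\bar C$; while the centralized model, obtained by gradient descent from $0$ with a sufficiently small constant step size on $\sum_{i=1}^M\sum_{j=1}^N\exp(-y_{ij}x_{ij}^Tw)$, converges in direction to the minimum-norm point $\arg\min_{w\in\bar C}\|w\|$ of the same set.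
   Context: Local-GD for binary linear classification over $M$ compute nodes with exponential loss and a vanishing proximal regularization parameter $\lambda\to0$; each local problem is solved exactly (unique minimizer of the strongly convex local objective) in each round, which corresponds to ''a large number of local steps''. $\bar C$ is the global feasible set of the hard-margin SVM on all data. *)

From HB Require Import structures.
From mathcomp Require Import all_boot all_order all_algebra.
From mathcomp Require Import all_classical all_reals all_analysis.
Set Implicit Arguments. Unset Strict Implicit. Unset Printing Implicit Defensive.
Import Order.TTheory GRing.Theory Num.Theory.
Import numFieldNormedType.Exports.
Local Open Scope classical_set_scope.
Local Open Scope ring_scope.

Section Defs.
Variable R : realType.

Definition dot (d : nat) (u v : 'rV[R]_d) : R := \sum_(k < d) u 0 k * v 0 k.
Definition enorm (d : nat) (v : 'rV[R]_d) : R := Num.sqrt (dot v v).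
Definition dirn (d : nat) (v : 'rV[R]_d) : 'rV[R]_d := (enorm v)^-1 *: v.

Variables (M N d : nat).
Variables (x : 'I_M -> 'I_N -> 'rV[R]_d) (y : 'I_M -> 'I_N -> R).

Definition Cset (i : 'I_M) : set 'rV[R]_d :=
  [set w | forall j : 'I_N, 1 <= y i j * dot (x i j) w].
Definition Cbar : set 'rV[R]_d := [set w | forall i : 'I_M, Cset i w].

Definition local_obj (i : 'I_M) (w0 : 'rV[R]_d) (lam : R) (w : 'rV[R]_d) : R :=
  \sum_(j < N) expR (- (y i j * dot (x i j) w)) + lam / 2 * enorm (w - w0) ^+ 2.

(* the (unique, for lam > 0) minimizer of the local objective *)
Definition local_step (i : 'I_M) (w0 : 'rV[R]_d) (lam : R) : 'rV[R]_d :=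
  xget 0 [set w | forall v, local_obj i w0 lam w <= local_obj i w0 lam v].

Definition localGD (lam : R) (K : nat) : 'rV[R]_d :=
  iter K (fun w0 => (M%:R)^-1 *: \sum_(i < M) local_step i w0 lam) 0.

(* gradient of the centralized loss L(w) = sum_i sum_j exp(-y_ij x_ij^T w) *)
Definition central_grad (w : 'rV[R]_d) : 'rV[R]_d :=
  \sum_(i < M) \sum_(j < N) (- (expR (- (y i j * dot (x i j) w)) * y i j)) *: x i j.

Definition centralGD (eta : R) (t : nat) : 'rV[R]_d :=
  iter t (fun w => w - eta *: central_grad w) 0.

End Defs.

Definition lebesgue_null (R : realType) (I : finType) (E : set (I -> R)) : Prop :=
  forall eps : R, 0 < eps ->
    exists a b : nat -> I -> R,
      (forall k i, a k i <= b k i) /\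
      E `<=` \bigcup_k [set z | forall i, a k i <= z i <= b k i] /\
      (forall n, \sum_(k < n) \prod_(i : I) (b k i - a k i) <= eps).

Definition data_of (R : realType) (M N d : nat) (z : ('I_M * 'I_N * 'I_d) -> R)
  : 'I_M -> 'I_N -> 'rV[R]_d := fun i j => \row_k z (i, j, k).

(* As the regularisation lam tends to 0, write t = -ln lam.  The exponential loss forces
   the local minimiser w_i^{k+1} to have margins at least 1 - o(1) on the data of node i,
   while the proximal term keeps it as close as possible to w_0^k; hence w_i^{k+1}/t tends
   to the Euclidean projection of w_0^k/t onto C_i.  By induction w_0^K/t tends to the K-th
   iterate, started at 0, of the map averaging the projections onto C_1, ..., C_M.  These
   iterates are Fejer monotone with respect to bar C, so they converge to a point of bar C.

   Along centralised gradient descent the loss decreases to 0 while every margin grows like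
   the length of the path travelled, and the normalised margin tends to 1/||w*||, where w* is
   the projection of 0 onto bar C.  Rescaling w_t to have normalised margin 1 gives a point of
   bar C of norm close to ||w*||, which the obtuse-angle property of the projection forces to
   be close to w*. *)

From HB Require Import structures.
From mathcomp Require Import all_boot all_order all_algebra.
From mathcomp Require Import all_classical all_reals all_analysis.
From mathcomp Require Import ring lra.
Set Implicit Arguments. Unset Strict Implicit. Unset Printing Implicit Defensive.
Import Order.TTheory GRing.Theory Num.Theory.
Import numFieldNormedType.Exports.
Local Open Scope classical_set_scope.
Local Open Scope ring_scope.

(** * Euclidean geometry of row vectors *)

Section Euclidean.
Variables (R : realType) (d : nat).
Implicit Types (u v w : 'rV[R]_d) (a e : R).

Lemma dotC u v : dot u v = dot v u.
Proof. by apply: eq_bigr => k _; rewrite mulrC. Qed.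

Lemma dotDl u v w : dot (u + v) w = dot u w + dot v w.
Proof. by rewrite /dot -big_split; apply: eq_bigr => k _; rewrite mxE mulrDl. Qed.

Lemma dotDr u v w : dot w (u + v) = dot w u + dot w v.
Proof. by rewrite dotC dotDl !(dotC w). Qed.

Lemma dotZl a u v : dot (a *: u) v = a * dot u v.
Proof. by rewrite /dot mulr_sumr; apply: eq_bigr => k _; rewrite mxE mulrA. Qed.

Lemma dotZr a u v : dot u (a *: v) = a * dot u v.
Proof. by rewrite dotC dotZl dotC. Qed.

Lemma dotNl u v : dot (- u) v = - dot u v.
Proof. by rewrite -scaleN1r dotZl mulN1r. Qed.

Lemma dotNr u v : dot u (- v) = - dot u v.
Proof. by rewrite dotC dotNl dotC. Qed.

Lemma dotBl u v w : dot (u - v) w = dot u w - dot v w.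
Proof. by rewrite dotDl dotNl. Qed.

Lemma dotBr u v w : dot w (u - v) = dot w u - dot w v.
Proof. by rewrite dotDr dotNr. Qed.

Lemma dot0l v : dot 0 v = 0.
Proof. by rewrite /dot big1 // => k _; rewrite mxE mul0r. Qed.

Lemma dot0r v : dot v 0 = 0.
Proof. by rewrite dotC dot0l. Qed.

Lemma dot_suml (I : finType) (f : I -> 'rV[R]_d) v :
  dot (\sum_i f i) v = \sum_i dot (f i) v.
Proof. by rewrite /dot exchange_big; apply: eq_bigr => k _; rewrite summxE mulr_suml. Qed.

Definition sqnorm v := dot v v.

Lemma sqnorm_ge0 v : 0 <= sqnorm v.
Proof. by apply: sumr_ge0 => k _; rewrite -expr2 sqr_ge0. Qed.

Lemma sqnormD u v : sqnorm (u + v) = sqnorm u + 2 * dot u v + sqnorm v.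
Proof. rewrite /sqnorm dotDl !dotDr (dotC v u); ring. Qed.

Lemma sqnormB u v : sqnorm (u - v) = sqnorm u - 2 * dot u v + sqnorm v.
Proof. rewrite /sqnorm dotBl !dotBr (dotC v u); ring. Qed.

Lemma sqnormZ a v : sqnorm (a *: v) = a ^+ 2 * sqnorm v.
Proof. rewrite /sqnorm dotZl dotZr; ring. Qed.

Lemma sqnormN v : sqnorm (- v) = sqnorm v.
Proof. by rewrite /sqnorm dotNl dotNr opprK. Qed.

Lemma sqnorm_distC u v : sqnorm (u - v) = sqnorm (v - u).
Proof. by rewrite -sqnormN opprB. Qed.

Lemma sqr_coord_le_sqnorm v k : v 0 k ^+ 2 <= sqnorm v.
Proof.
rewrite /sqnorm /dot (bigD1 k) //= -expr2 lerDl.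
by apply: sumr_ge0 => i _; rewrite -expr2 sqr_ge0.
Qed.

Lemma sqnorm_le_coord v e : (forall k, `|v 0 k| <= e) -> sqnorm v <= d%:R * e ^+ 2.
Proof.
move=> le_e; apply: (@le_trans _ _ (\sum_(k < d) e ^+ 2)).
  apply: ler_sum => k _; rewrite -expr2 -real_normK ?num_real //.
  by rewrite ler_pXn2r ?nnegrE // (le_trans _ (le_e k)).
by rewrite sumr_const card_ord mulr_natl.
Qed.

Lemma sqnorm_eq0 v : sqnorm v = 0 -> v = 0.
Proof.
move=> v0; apply/rowP => k; rewrite mxE; apply/eqP; rewrite -sqrf_eq0 eq_le sqr_ge0.
by rewrite -v0 sqr_coord_le_sqnorm.
Qed.

Lemma cauchy_schwarz u v : dot u v ^+ 2 <= sqnorm u * sqnorm v.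
Proof.
have [/sqnorm_eq0 ->|v_neq0] := eqVneq (sqnorm v) 0.
  by rewrite /sqnorm !dot0r expr0n mulr0.
have v_gt0 : 0 < sqnorm v by rewrite lt_def v_neq0 sqnorm_ge0.
have := sqnorm_ge0 (u - (dot u v / sqnorm v) *: v).
rewrite sqnormB dotZr sqnormZ.
have -> : sqnorm u - 2 * (dot u v / sqnorm v * dot u v) +
    (dot u v / sqnorm v) ^+ 2 * sqnorm v = sqnorm u - dot u v ^+ 2 / sqnorm v.
  by field; rewrite gt_eqF.
by rewrite subr_ge0 ler_pdivrMr.
Qed.

Lemma enorm_ge0 v : 0 <= enorm v.
Proof. exact: sqrtr_ge0. Qed.

Lemma enorm_sqr v : enorm v ^+ 2 = sqnorm v.
Proof. by rewrite sqr_sqrtr // sqnorm_ge0. Qed.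

Lemma enorm_leE v e : 0 <= e -> (enorm v <= e) = (sqnorm v <= e ^+ 2).
Proof. by move=> e_ge0; rewrite -enorm_sqr ler_pXn2r // ?nnegrE // enorm_ge0. Qed.

Lemma enorm_ltE v e : 0 <= e -> (enorm v < e) = (sqnorm v < e ^+ 2).
Proof. by move=> e_ge0; rewrite -enorm_sqr ltr_pXn2r // ?nnegrE // enorm_ge0. Qed.

Lemma dot_le_enorm u v : dot u v <= enorm u * enorm v.
Proof.
have uv_ge0 : 0 <= enorm u * enorm v by rewrite mulr_ge0 ?enorm_ge0.
rewrite (le_trans (ler_norm _)) // -(ler_pXn2r (_ : 0 < 2)%N) ?nnegrE //.
by rewrite real_normK ?num_real // exprMn !enorm_sqr cauchy_schwarz.
Qed.

Lemma normr_dot_le u v : `|dot u v| <= enorm u * enorm v.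
Proof.
rewrite -(ler_pXn2r (_ : 0 < 2)%N) ?nnegrE ?mulr_ge0 ?enorm_ge0 //.
by rewrite real_normK ?num_real // exprMn !enorm_sqr cauchy_schwarz.
Qed.

Lemma enorm0 : enorm (0 : 'rV[R]_d) = 0.
Proof. by rewrite /enorm dot0l sqrtr0. Qed.

Lemma enorm_eq0 v : enorm v = 0 -> v = 0.
Proof. by move=> v0; apply: sqnorm_eq0; rewrite -enorm_sqr v0 expr0n. Qed.

Lemma enorm_gt0 v : v != 0 -> 0 < enorm v.
Proof.
by move=> v_neq0; rewrite lt_def enorm_ge0 andbT; apply: contra v_neq0 => /eqP/enorm_eq0 ->.
Qed.

Lemma enormN v : enorm (- v) = enorm v.
Proof. by rewrite /enorm dotNl dotNr opprK. Qed.

Lemma enormZ a v : enorm (a *: v) = `|a| * enorm v.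
Proof. by rewrite /enorm -/(sqnorm _) sqnormZ sqrtrM ?sqr_ge0 // sqrtr_sqr. Qed.

Lemma enormD u v : enorm (u + v) <= enorm u + enorm v.
Proof.
rewrite enorm_leE ?addr_ge0 ?enorm_ge0 // sqnormD -!enorm_sqr.
have := dot_le_enorm u v; lra.
Qed.

Lemma enorm_distC u v : enorm (u - v) = enorm (v - u).
Proof. by rewrite -enormN opprB. Qed.

Lemma enorm_distD u v w : enorm (u - w) <= enorm (u - v) + enorm (v - w).
Proof. by have := enormD (u - v) (v - w); rewrite addrA subrK. Qed.

Lemma enorm_subD u v : enorm u <= enorm (u - v) + enorm v.
Proof. by have := enorm_distD u v 0; rewrite !subr0. Qed.

Lemma lerB_enorm u v : enorm u - enorm v <= enorm (u - v).
Proof. by rewrite lerBlDr enorm_subD. Qed.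

Lemma enorm_sum (I : finType) (f : I -> 'rV[R]_d) :
  enorm (\sum_i f i) <= \sum_i enorm (f i).
Proof.
elim/big_ind2 : _ => [|u a v b uv vb|//]; first by rewrite enorm0.
exact: le_trans (enormD _ _) (lerD _ _).
Qed.

Lemma coord_le_enorm v k : `|v 0 k| <= enorm v.
Proof. by rewrite -sqrtr_sqr ler_sqrt ?sqnorm_ge0 ?sqr_coord_le_sqnorm. Qed.

Lemma normr_le_enorm v : `|v| <= enorm v.
Proof.
have -> : `|v| = mx_norm v by [].
have [->|/mx_norm_neq0[[i j] ->]] := eqVneq (mx_norm v) 0; first exact: enorm_ge0.
by rewrite /= (ord1 i) coord_le_enorm.
Qed.

Lemma enorm_le_normr v : enorm v <= d.+1%:R * `|v|.
Proof.
have coord_le k : `|v 0 k| <= `|v|.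
  have -> : `|v| = mx_norm v by [].
  rewrite mx_normrE.
  exact: (le_bigmax (0 : R) (fun ij : 'I_1 * 'I_d => `|v ij.1 ij.2|) (ord0, k)).
rewrite enorm_leE ?mulr_ge0 //; apply: le_trans (sqnorm_le_coord coord_le) _.
rewrite exprMn ler_wpM2r ?sqr_ge0 // expr2 -natrM ler_nat.
by rewrite (leq_trans (leqnSn d)) // leq_pmulr.
Qed.

Lemma cvg_enormP (T : Type) (F : set_system T) {FF : Filter F}
    (f : T -> 'rV[R]_d) (l : 'rV[R]_d) :
  f @ F --> l <-> forall e, 0 < e -> \forall t \near F, enorm (f t - l) < e.
Proof.
split=> [/cvgrPdist_lt fl e e_gt0|fl].
  have /fl : 0 < e / d.+1%:R by rewrite divr_gt0.
  apply: filterS => t; rewrite distrC => lt_e.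
  by rewrite (le_lt_trans (enorm_le_normr _)) // -ltr_pdivlMl // mulrC.
apply/cvgrPdist_lt => e /fl; apply: filterS => t lt_e.
by rewrite distrC (le_lt_trans (normr_le_enorm _)).
Qed.

End Euclidean.

Section Direction.
Variables (R : realType) (d : nat).
Implicit Types (u v w : 'rV[R]_d).

Lemma dirnZ t v : 0 < t -> dirn (t *: v) = dirn v.
Proof.
move=> t_gt0; rewrite /dirn enormZ gtr0_norm // scalerA.
have [->|v_neq0] := eqVneq v 0; first by rewrite !scaler0.
by rewrite invfM mulrAC mulVf ?mul1r // gt_eqF.
Qed.

Lemma enorm_dirnB u v : v != 0 -> enorm (dirn u - dirn v) <= 2 * enorm (u - v) / enorm v.
Proof.
move=> /enorm_gt0 v_gt0; rewrite ler_pdivlMr // mulrC.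
have -> : dirn u - dirn v =
    (enorm v)^-1 *: ((enorm v / enorm u) *: u - u) + (enorm v)^-1 *: (u - v).
  by rewrite -scalerDr addrA subrK scalerBr scalerA mulrA mulVf ?mul1r ?gt_eqF.
rewrite -scalerDr enormZ gtr0_norm ?invr_gt0 // mulrA mulfV ?mul1r ?gt_eqF //.
apply: le_trans (enormD _ _) _; rewrite mulr2n mulrDl mul1r lerD2r.
have [->|u_neq0] := eqVneq u 0; first by rewrite scaler0 subr0 enorm0 enorm_ge0.
have u_gt0 := enorm_gt0 u_neq0.
have -> : (enorm v / enorm u) *: u - u = (enorm v / enorm u - 1) *: u.
  by rewrite scalerBl scale1r.
rewrite enormZ -{2}(gtr0_norm u_gt0) -normrM mulrBl divfK ?gt_eqF // mul1r.
by rewrite ler_norml lerNl opprB lerB_enorm /= enorm_distC lerB_enorm.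
Qed.

Lemma cvg_dirn (T : Type) (F : set_system T) {FF : Filter F} (f : T -> 'rV[R]_d) v :
  v != 0 -> f @ F --> v -> dirn (f t) @[t --> F] --> dirn v.
Proof.
move=> v_neq0 /cvg_enormP fv; apply/cvg_enormP => e e_gt0.
have v_gt0 := enorm_gt0 v_neq0.
have /fv : 0 < e * enorm v / 2 by rewrite divr_gt0 ?mulr_gt0.
apply: filterS => t ftv; apply: le_lt_trans (enorm_dirnB _ v_neq0) _.
rewrite ltr_pdivrMr //; lra.
Qed.

End Direction.

(** * Minimizers and projections *)

Section Minimizers.
Variables (R : realType) (d : nat).
Implicit Types (S : set 'rV[R]_d) (f : 'rV[R]_d -> R).

Lemma enorm_bounded_cluster (u : nat -> 'rV[R]_d) B :
  (forall n, enorm (u n) <= B) ->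
  exists v, forall e, 0 < e -> forall n0, exists2 n, (n0 <= n)%N & enorm (u n - v) < e.
Proof.
move=> uB.
pose box := [set v : 'rV[R]_d | forall i, `[-B, B]%classic (v ord0 i)].
have box_compact : compact box.
  by apply: (@rV_compact _ _ (fun i => `[-B, B]%classic)) => i; apply: segment_compact.
have u_box : (u @ \oo) box.
  exists 0%N => // n _ i /=; rewrite in_itv /= -ler_norml.
  exact: le_trans (coord_le_enorm _ _) (uB n).
have [v [_ v_cluster]] := box_compact (u @ \oo) _ u_box.
exists v => e e_gt0 n0.
have e'_gt0 : 0 < e / d.+1%:R by rewrite divr_gt0.
have tail_n0 : (u @ \oo) [set w | exists2 n, (n0 <= n)%N & w = u n].
  by exists n0 => // n /= n0n; exists n.
have [w [[n n0n ->] unv]] := v_cluster _ _ tail_n0 (nbhsx_ballx v _ e'_gt0).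
exists n => //; rewrite (le_lt_trans (enorm_le_normr _)) // -ltr_pdivlMl // mulrC.
by move: unv; rewrite -ball_normE /ball_ /= distrC.
Qed.

Definition enorm_closed S :=
  forall v, (forall e, 0 < e -> exists2 s, S s & enorm (s - v) < e) -> S v.

Definition lsc_at f v :=
  forall e, 0 < e -> exists2 del, 0 < del & forall w, enorm (w - v) < del -> f v <= f w + e.

Lemma lsc_min_exists S f s0 B :
  S s0 -> enorm_closed S -> (forall v, lsc_at f v) -> (forall s, S s -> 0 <= f s) ->
  (forall s, S s -> f s <= f s0 + 1 -> enorm s <= B) ->
  exists2 v, S v & forall s, S s -> f v <= f s.
Proof.
move=> Ss0 S_closed f_lsc f_ge0 f_coercive.
have inf_f : has_inf (f @` S).
  by split; [exists (f s0), s0 | exists 0 => _ [s Ss <-]; exact: f_ge0].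
pose I := inf (f @` S).
have I_le s : S s -> I <= f s by move=> Ss; apply: ge_inf; [exact: inf_f.2 | exists s].
have near_inf n : exists s, S s /\ f s < I + n.+1%:R^-1.
  have n_gt0 : 0 < n.+1%:R^-1 :> R by rewrite invr_gt0 ltr0n.
  have [_ [s Ss <-] ?] := inf_adherent n_gt0 inf_f.
  by exists s.
have [u u_min] := choice near_inf.
have u_bounded n : enorm (u n) <= B.
  have [Su fu] := u_min n; apply: f_coercive => //; apply: (le_trans (ltW fu)).
  by rewrite lerD ?I_le // invf_le1 ?ler1n.
have [v v_cluster] := enorm_bounded_cluster u_bounded.
have Sv : S v.
  apply: S_closed => e e_gt0; have [n _ unv] := v_cluster e e_gt0 0%N.
  by exists (u n) => //; case: (u_min n).
exists v => // s Ss; apply: le_trans (I_le s Ss).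
apply/ler_addgt0Pr => e e_gt0.
have e2_gt0 : 0 < e / 2 by rewrite divr_gt0.
have [del del_gt0 fv_le] := f_lsc v _ e2_gt0.
pose n0 := Num.Def.truncn (e / 2)^-1.
have n0_small : n0.+1%:R^-1 < e / 2.
  rewrite -[e / 2]invrK ltf_pV2 ?posrE ?invr_gt0 ?ltr0n ?divr_gt0 //.
  exact: truncnS_gt.
have [n n0n unv] := v_cluster del del_gt0 n0.
have [_ fu] := u_min n.
have n_small : n.+1%:R^-1 <= n0.+1%:R^-1 :> R by rewrite lef_pV2 ?posrE ?ltr0n ?ler_nat.
apply: le_trans (fv_le _ unv) _; apply: le_trans (lerD (ltW fu) (lexx _)) _.
by rewrite -addrA lerD2l {2}(splitr e) lerD2r ltW ?(le_lt_trans n_small).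
Qed.

Lemma lsc_add f g v : lsc_at f v -> lsc_at g v -> lsc_at (fun w => f w + g w) v.
Proof.
move=> f_lsc g_lsc e e_gt0; have e2_gt0 : 0 < e / 2 by rewrite divr_gt0.
have [d1 d1_gt0 le1] := f_lsc _ e2_gt0; have [d2 d2_gt0 le2] := g_lsc _ e2_gt0.
exists (Num.min d1 d2) => [|w]; first by rewrite lt_min d1_gt0.
by rewrite lt_min => /andP[/le1 ? /le2 ?]; lra.
Qed.

Lemma lsc_sum (I : finType) (F : I -> 'rV[R]_d -> R) v :
  (forall i, lsc_at (F i) v) -> lsc_at (fun w => \sum_i F i w) v.
Proof.
move=> F_lsc; elim: (index_enum I) => [|i r IHr].
  have -> : (fun w => \sum_(i <- [::]) F i w) = fun=> 0 by apply/funext => w; rewrite big_nil.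
  by move=> e e_gt0; exists 1 => // w _; rewrite add0r ltW.
have -> : (fun w => \sum_(j <- i :: r) F j w) = fun w => F i w + \sum_(j <- r) F j w.
  by apply/funext => w; rewrite big_cons.
exact: lsc_add.
Qed.

End Minimizers.

Section LowerSemicontinuity.
Variables (R : realType) (d : nat).
Implicit Types (f : 'rV[R]_d -> R) (v : 'rV[R]_d).

Lemma lsc_scale f c v : 0 <= c -> lsc_at f v -> lsc_at (fun w => c * f w) v.
Proof.
move=> c_ge0 f_lsc e e_gt0.
have [del del_gt0 le_f] := f_lsc _ (divr_gt0 e_gt0 (ltr_wpDl c_ge0 ltr01)).
exists del => // w /le_f le_fw.
have ce_le : c * (e / (c + 1)) <= e by rewrite mulrA ler_pdivrMr ?ltr_wpDl //; nra.
have : c * f v <= c * (f w + e / (c + 1)) by rewrite ler_wpM2l.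
lra.
Qed.

Lemma lsc_sqnormB v0 v : lsc_at (fun w => sqnorm (w - v0)) v.
Proof.
move=> e e_gt0; pose E := enorm (v - v0).
have E_ge0 : 0 <= E := enorm_ge0 _.
have E3_gt0 : 0 < 2 * E + 3 by lra.
exists (Num.min 1 (e / (2 * E + 3))) => [|w]; first by rewrite lt_min ltr01 divr_gt0.
rewrite lt_min => /andP[h_lt1 h_lt].
pose a := enorm (w - v0); pose h := enorm (w - v).
have a_ge0 : 0 <= a := enorm_ge0 _.
have h_ge0 : 0 <= h := enorm_ge0 _.
have E_le : E <= a + h.
  by apply: le_trans (enorm_distD v w v0) _; rewrite enorm_distC addrC.
have a_le : a <= E + h by apply: le_trans (enorm_distD w v v0) _; rewrite addrC.
have he_le : h * (2 * E + 3) <= e by rewrite -ler_pdivlMr // ltW.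
rewrite -!enorm_sqr -/E -/a.
have : E ^+ 2 <= (a + h) ^+ 2 by rewrite ler_pXn2r // ?nnegrE // addr_ge0.
have : h * a <= h * (E + h) by rewrite ler_wpM2l.
have : h * h <= h * 1 by rewrite ler_wpM2l // ltW.
rewrite !expr2; lra.
Qed.

Lemma lsc_expR_dot (a : 'rV[R]_d) v : lsc_at (fun w => expR (- dot a w)) v.
Proof.
move=> e e_gt0; set X := expR (- dot a v).
have X_gt0 : 0 < X := expR_gt0 _.
have aX_ge0 : 0 <= X * enorm a by rewrite mulr_ge0 ?enorm_ge0 ?ltW.
exists (e / (X * enorm a + 1)) => [|w wv]; first by rewrite divr_gt0 // ltr_wpDl.
have -> : expR (- dot a w) = X * expR (- dot a (w - v)).
  by rewrite /X -expRD dotBr; congr expR; ring.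
have le_exp := ler_wpM2l (ltW X_gt0) (expR_ge1Dx (- dot a (w - v))).
rewrite mulrBr mulr1 in le_exp.
have dot_le := ler_wpM2l (ltW X_gt0) (dot_le_enorm a (w - v)).
have small : X * (enorm a * enorm (w - v)) <= e.
  have K_gt0 : 0 < X * enorm a + 1 by rewrite ltr_wpDl.
  have : (X * enorm a + 1) * (e / (X * enorm a + 1)) = e by rewrite mulrC divfK ?gt_eqF.
  have := enorm_ge0 (w - v); rewrite mulrA; nra.
lra.
Qed.

End LowerSemicontinuity.

Section Projection.
Variables (R : realType) (d : nat).
Implicit Types (S : set 'rV[R]_d) (v : 'rV[R]_d).

Definition proj S v0 :=
  xget 0 [set p | S p /\ forall c, S c -> sqnorm (p - v0) <= sqnorm (c - v0)].

Definition convex S :=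
  forall p c, S p -> S c -> forall s, 0 <= s <= 1 -> S (p + s *: (c - p)).

Variable S : set 'rV[R]_d.
Hypotheses (S_neq0 : exists s, S s) (S_closed : enorm_closed S).

Lemma proj_spec v0 :
  S (proj S v0) /\ forall c, S c -> sqnorm (proj S v0 - v0) <= sqnorm (c - v0).
Proof.
case: S_neq0 => s0 Ss0; pose B := enorm v0 + sqnorm (s0 - v0) + 2.
have coercive s : S s -> sqnorm (s - v0) <= sqnorm (s0 - v0) + 1 -> enorm s <= B.
  move=> _ le_s; have := enorm_subD s v0.
  have : enorm (s - v0) <= 1 + sqnorm (s - v0).
    by rewrite -enorm_sqr; have := enorm_ge0 (s - v0); nra.
  rewrite /B; lra.
have [p Sp p_min] := lsc_min_exists Ss0 S_closed (@lsc_sqnormB _ _ v0)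
  (fun s _ => sqnorm_ge0 _) coercive.
have ex_min : exists p, [set p | S p /\ forall c, S c -> sqnorm (p - v0) <= sqnorm (c - v0)] p.
  by exists p.
by rewrite /proj; apply: xgetPex ex_min.
Qed.

Lemma proj_in v0 : S (proj S v0).
Proof. exact: (proj_spec v0).1. Qed.

Lemma proj_min v0 c : S c -> sqnorm (proj S v0 - v0) <= sqnorm (c - v0).
Proof. exact: (proj_spec v0).2. Qed.

Hypothesis S_convex : convex S.

Lemma proj_obtuse v0 c : S c ->
  sqnorm (proj S v0 - v0) + sqnorm (c - proj S v0) <= sqnorm (c - v0).
Proof.
move=> Sc; pose p := proj S v0; pose D := dot (p - v0) (c - p); pose Q := sqnorm (c - p).
have Q_ge0 : 0 <= Q := sqnorm_ge0 _.
have segment s : 0 <= s <= 1 -> 0 <= 2 * s * D + s ^+ 2 * Q.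
  move=> s01; have := proj_min v0 (S_convex (proj_in v0) Sc s01).
  by rewrite -/p addrAC (sqnormD (p - v0)) sqnormZ dotZr -/D -/Q; lra.
have D_ge0 : 0 <= D.
  rewrite leNgt; apply/negP => D_lt0.
  have QD_gt0 : 0 < Q - D by lra.
  pose s := - D / (Q - D).
  have s_gt0 : 0 < s by rewrite divr_gt0 // oppr_gt0.
  have s_le1 : s <= 1 by rewrite ler_pdivrMr //; lra.
  have := segment s; rewrite (ltW s_gt0) s_le1 => /(_ isT).
  have -> : 2 * s * D + s ^+ 2 * Q = D ^+ 2 * (2 * D - Q) / (Q - D) ^+ 2.
    by rewrite /s; field; rewrite gt_eqF.
  have D2_gt0 : 0 < D ^+ 2 by rewrite expr2 nmulr_rgt0.
  by rewrite pmulr_lge0 ?invr_gt0 ?exprn_gt0 // pmulr_rge0 //; lra.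
have -> : c - v0 = (c - p) + (p - v0) by rewrite addrA subrK.
by rewrite (sqnormD (c - p)) dotC -/D -/Q; lra.
Qed.

End Projection.

(** * Hard-margin feasible sets and averaged projections *)

Section Feasible.
Variables (R : realType) (d : nat) (J : finType) (a : J -> 'rV[R]_d).

Definition feasible := [set w : 'rV[R]_d | forall j, 1 <= dot (a j) w].

Lemma feasible_closed : enorm_closed feasible.
Proof.
move=> v v_lim j; rewrite leNgt; apply/negP => v_out.
pose g := 1 - dot (a j) v.
have g_gt0 : 0 < g by rewrite subr_gt0.
have aj1_gt0 : 0 < enorm (a j) + 1 by rewrite ltr_wpDl ?enorm_ge0.
have [s Fs sv] := v_lim _ (divr_gt0 g_gt0 aj1_gt0).
have := Fs j; rewrite -[s](subrK v) dotDr.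
have := dot_le_enorm (a j) (s - v).
have : enorm (a j) * enorm (s - v) <= enorm (a j) * (g / (enorm (a j) + 1)).
  by rewrite ler_wpM2l ?enorm_ge0 ?ltW.
have : enorm (a j) * (g / (enorm (a j) + 1)) < g.
  by rewrite mulrA ltr_pdivrMr //; nra.
rewrite /g; lra.
Qed.

Lemma feasible_convex : convex feasible.
Proof.
move=> p c Fp Fc s /andP[s_ge0 s_le1] j; rewrite dotDr dotZr dotBr.
by have := Fp j; have := Fc j; nra.
Qed.

Lemma feasible_proj_obtuse m c : (exists s, feasible s) -> feasible c ->
  sqnorm (proj feasible m - m) + sqnorm (c - proj feasible m) <= sqnorm (c - m).
Proof.
by move=> F_neq0 Fc; exact: (proj_obtuse F_neq0 feasible_closed feasible_convex m Fc).
Qed.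

Lemma feasible_scale c v : 0 < c -> (forall j, c <= dot (a j) v) -> feasible (c^-1 *: v).
Proof. by move=> c_gt0 c_le j; rewrite dotZr ler_pdivlMl // mulr1. Qed.

Lemma feasible_neq0 (j : J) v : feasible v -> v != 0.
Proof. by move=> Fv; apply: contraTneq (Fv j) => ->; rewrite dot0r ler10. Qed.

End Feasible.

Definition signed_pt (R : realType) (M N d : nat)
  (x : 'I_M -> 'I_N -> 'rV[R]_d) (y : 'I_M -> 'I_N -> R) i j := y i j *: x i j.

Section Dataset.
Variables (R : realType) (M N d : nat).
Variables (x : 'I_M -> 'I_N -> 'rV[R]_d) (y : 'I_M -> 'I_N -> R).

Lemma Cset_feasible i : Cset x y i = feasible (signed_pt x y i).
Proof. by apply/seteqP; split => w /= Cw j; move: (Cw j); rewrite /signed_pt dotZl. Qed.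

Lemma Cbar_feasible :
  Cbar x y = feasible (fun p : 'I_M * 'I_N => signed_pt x y p.1 p.2).
Proof.
apply/seteqP; split => w /= Cw; first by move=> [i j]; rewrite /signed_pt dotZl; exact: Cw.
by move=> i j; have := Cw (i, j); rewrite /signed_pt dotZl.
Qed.

End Dataset.

Section AveragedProjections.
Variables (R : realType) (d M : nat).
Hypothesis M_gt0 : (0 < M)%N.

Lemma sqnorm_avg_le (u : 'I_M -> 'rV[R]_d) :
  sqnorm (M%:R^-1 *: \sum_i u i) <= M%:R^-1 * \sum_i sqnorm (u i).
Proof.
have M_neq0 : M%:R != 0 :> R by rewrite pnatr_eq0 -lt0n.
pose m := M%:R^-1 *: \sum_i u i.
have sum_u : \sum_i u i = M%:R *: m by rewrite scalerA mulfV ?scale1r.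
have : 0 <= \sum_i sqnorm (u i - m) by apply: sumr_ge0 => i _; apply: sqnorm_ge0.
have -> : \sum_i sqnorm (u i - m) = \sum_i sqnorm (u i) - M%:R * sqnorm m.
  under eq_bigr do rewrite sqnormB.
  rewrite big_split /= sumrB -mulr_sumr -dot_suml sum_u dotZl sumr_const card_ord.
  rewrite /sqnorm -mulr_natl; ring.
by rewrite subr_ge0 -ler_pdivlMl ?ltr0n // mulrC.
Qed.

Variables (C : 'I_M -> set 'rV[R]_d).
Hypotheses (C_closed : forall i, enorm_closed (C i)) (C_convex : forall i, convex (C i)).

Definition avg_proj v := M%:R^-1 *: \sum_i proj (C i) v.

Lemma avg_proj_fejer v c : (forall i, C i c) ->
  sqnorm (avg_proj v - c) + M%:R^-1 * \sum_i sqnorm (proj (C i) v - v) <= sqnorm (v - c).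
Proof.
move=> Cc; have M_neq0 : M%:R != 0 :> R by rewrite pnatr_eq0 -lt0n.
have C_neq0 i : exists s, C i s by exists c.
have -> : avg_proj v - c = M%:R^-1 *: \sum_i (proj (C i) v - c).
  by rewrite sumrB sumr_const card_ord -[c *+ M]scaler_nat scalerBr scalerA mulVf ?scale1r.
apply: le_trans (lerD (sqnorm_avg_le _) (lexx _)) _.
rewrite -mulrDr -big_split /=.
apply: le_trans (ler_wpM2l _ (ler_sum _ (fun i _ => _ : _ <= sqnorm (v - c)))) _.
- by rewrite invr_ge0 ler0n.
- move=> i _; rewrite (sqnorm_distC (proj _ v) c) (sqnorm_distC v c) addrC.
  exact: proj_obtuse.
by rewrite sumr_const card_ord -[sqnorm _ *+ M]mulr_natl mulrA mulVf ?mul1r.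
Qed.

End AveragedProjections.

Section FejerSequences.
Variables (R : realType) (d : nat).

Lemma dissipation_cvg0 (D r : nat -> R) :
  (forall n, 0 <= D n) -> (forall n, 0 <= r n) -> (forall n, D n.+1 + r n <= D n) ->
  forall e, 0 < e -> exists n0, forall n, (n0 <= n)%N -> r n < e.
Proof.
move=> D_ge0 r_ge0 D_dissip e e_gt0.
have D_noninc : nonincreasing_seq D.
  by apply/nonincreasing_seqP => n; have := D_dissip n; have := r_ge0 n; lra.
have inf_D : has_inf (range D) by split; [exists (D 0%N), 0%N | exists 0 => _ [n _ <-]].
have [_ [n0 _ <-] Dn0_lt] := inf_adherent e_gt0 inf_D.
exists n0 => n n0n.
have : inf (range D) <= D n.+1 by apply: ge_inf; [exact: inf_D.2 | exists n.+1].
have := D_noninc _ _ n0n; have := D_dissip n; lra.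
Qed.

Lemma fejer_cvg (S : set 'rV[R]_d) (u : nat -> 'rV[R]_d) vs :
  (forall c n, S c -> sqnorm (u n.+1 - c) <= sqnorm (u n - c)) -> S vs ->
  (forall e, 0 < e -> forall n0, exists2 n, (n0 <= n)%N & enorm (u n - vs) < e) ->
  u @ \oo --> vs.
Proof.
move=> u_fejer Svs vs_cluster; apply/cvg_enormP => e e_gt0.
have [n0 _ un0_lt] := vs_cluster e e_gt0 0%N.
have u_noninc : nonincreasing_seq (fun n => sqnorm (u n - vs)).
  by apply/nonincreasing_seqP => n; exact: u_fejer.
exists n0 => // n /= n0n; rewrite enorm_ltE ?ltW // (le_lt_trans (u_noninc _ _ n0n)) //.
by rewrite -enorm_ltE ?ltW.
Qed.

End FejerSequences.

Section AveragedProjectionsConvergence.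
Variables (R : realType) (d M : nat).
Hypothesis M_gt0 : (0 < M)%N.
Variables (C : 'I_M -> set 'rV[R]_d).
Hypotheses (C_closed : forall i, enorm_closed (C i)) (C_convex : forall i, convex (C i)).
Hypothesis C_meet : exists c, forall i, C i c.

Theorem avg_proj_iter_cvg v0 :
  exists2 vs, (forall i, C i vs) & iter K (avg_proj C) v0 @[K --> \oo] --> vs.
Proof.
pose v K := iter K (avg_proj C) v0.
have vS K : v K.+1 = avg_proj C (v K) by [].
pose r K := M%:R^-1 * \sum_i sqnorm (proj (C i) (v K) - v K).
have fejer c K : (forall i, C i c) -> sqnorm (v K.+1 - c) + r K <= sqnorm (v K - c).
  by move=> Cc; rewrite vS; apply: avg_proj_fejer.
have r_ge0 K : 0 <= r K.
  by rewrite mulr_ge0 ?invr_ge0 ?sumr_ge0 // => i _; apply: sqnorm_ge0.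
have v_fejer c K : (forall i, C i c) -> sqnorm (v K.+1 - c) <= sqnorm (v K - c).
  by move=> Cc; have := fejer c K Cc; have := r_ge0 K; lra.
have [c0 Cc0] := C_meet.
have r_cvg0 := dissipation_cvg0 (fun K => sqnorm_ge0 (v K - c0)) r_ge0 (fejer c0 ^~ Cc0).
have v_bounded K : enorm (v K) <= enorm (v0 - c0) + enorm c0.
  apply: le_trans (enorm_subD _ c0) _; rewrite lerD2r enorm_leE ?enorm_ge0 // enorm_sqr.
  elim: K => // K; exact/le_trans/v_fejer.
have [vs vs_cluster] := enorm_bounded_cluster v_bounded.
have Cvs i : C i vs.
  apply: C_closed => e e_gt0.
  have e2_gt0 : 0 < e / 2 by rewrite divr_gt0.
  have M_pos : 0 < M%:R :> R by rewrite ltr0n.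
  have [K0 r_small] := r_cvg0 _ (divr_gt0 (exprn_gt0 2 e2_gt0) M_pos).
  have [K K0K vK_near] := vs_cluster _ e2_gt0 K0.
  exists (proj (C i) (v K)); first by apply: proj_in => //; exists c0.
  apply: le_lt_trans (enorm_distD _ (v K) _) _.
  suff : enorm (proj (C i) (v K) - v K) < e / 2 by lra.
  rewrite enorm_ltE ?ltW // (le_lt_trans _ (_ : M%:R * r K < _)) //.
    rewrite /r mulrA mulfV ?pnatr_eq0 -?lt0n // mul1r (bigD1 i) //= lerDl.
    by apply: sumr_ge0 => j _; apply: sqnorm_ge0.
  by rewrite mulrC -ltr_pdivlMr ?ltr0n // r_small.
by exists vs => //; apply: fejer_cvg (fun c K Cc => v_fejer c K Cc) Cvs vs_cluster.
Qed.

End AveragedProjectionsConvergence.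

(** * The proximal step as the regularisation vanishes *)

Section ExpLoss.
Variables (R : realType) (d : nat) (J : finType) (a : J -> 'rV[R]_d).
Local Notation N := (#|J|%:R : R).

Definition exp_loss (w : 'rV[R]_d) := \sum_j expR (- dot (a j) w).

Definition prox_obj (w0 : 'rV[R]_d) lam w := exp_loss w + lam / 2 * sqnorm (w - w0).

Lemma exp_loss_ge0 w : 0 <= exp_loss w.
Proof. by apply: sumr_ge0 => j _; apply: expR_ge0. Qed.

Lemma expR_le_exp_loss w j : expR (- dot (a j) w) <= exp_loss w.
Proof. by rewrite /exp_loss (bigD1 j) //= lerDl sumr_ge0 // => i _; apply: expR_ge0. Qed.

Lemma prox_min_exists w0 lam : 0 < lam ->
  exists w, forall v, prox_obj w0 lam w <= prox_obj w0 lam v.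
Proof.
move=> lam_gt0; pose B := enorm w0 + 1 + 2 * (prox_obj w0 lam w0 + 1) / lam.
have coercive s : setT s -> prox_obj w0 lam s <= prox_obj w0 lam w0 + 1 -> enorm s <= B.
  move=> _ le_s; have := enorm_subD s w0.
  have : enorm (s - w0) <= 1 + sqnorm (s - w0).
    by rewrite -enorm_sqr; have := enorm_ge0 (s - w0); nra.
  have : sqnorm (s - w0) <= 2 * (prox_obj w0 lam w0 + 1) / lam.
    rewrite ler_pdivlMr //; move: le_s; rewrite /prox_obj.
    by have := exp_loss_ge0 s; lra.
  rewrite /B; lra.
have prox_lsc v : lsc_at (prox_obj w0 lam) v.
  apply: lsc_add; first by apply: lsc_sum => j; apply: lsc_expR_dot.
  by apply: lsc_scale; [rewrite divr_ge0 ?ltW | apply: lsc_sqnormB].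
have obj_ge0 s : setT s -> 0 <= prox_obj w0 lam s.
  by move=> _; rewrite addr_ge0 ?exp_loss_ge0 // mulr_ge0 ?divr_ge0 ?sqnorm_ge0 ?ltW.
have [w _ w_min] := lsc_min_exists (I : setT w0) (fun v _ => I) prox_lsc obj_ge0 coercive.
by exists w => v; apply: w_min.
Qed.

Section ScaledMinimizer.
Variables (w0 w p : 'rV[R]_d) (t lam : R).
Hypotheses (t_gt0 : 0 < t) (lamE : lam = expR (- t)).
Hypothesis w_min : forall v, prox_obj w0 lam w <= prox_obj w0 lam v.
Hypothesis p_feasible : feasible a p.

Let lam_gt0 : 0 < lam. Proof. by rewrite lamE expR_gt0. Qed.

Lemma prox_min_le : prox_obj w0 lam w <= lam * (N + t ^+ 2 / 2 * sqnorm (p - t^-1 *: w0)).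
Proof.
apply: le_trans (w_min (t *: p)) _; rewrite mulrDr /prox_obj lerD //.
  apply: le_trans (_ : _ <= \sum_(j : J) lam) _; last by rewrite sumr_const mulr_natr.
  by apply: ler_sum => j _; rewrite lamE ler_expR dotZr lerN2 ler_pMr.
have -> : t *: p - w0 = t *: (p - t^-1 *: w0).
  by rewrite scalerBr scalerA mulfV ?gt_eqF ?scale1r.
rewrite sqnormZ [X in _ <= X](_ : _ = lam / 2 * (t ^+ 2 * sqnorm (p - t^-1 *: w0))) //.
by field.
Qed.

Lemma prox_scaled_dist_le :
  t ^+ 2 * sqnorm (t^-1 *: w - t^-1 *: w0) <= 2 * N + t ^+ 2 * sqnorm (p - t^-1 *: w0).
Proof.
have : lam / 2 * sqnorm (w - w0) <= prox_obj w0 lam w by rewrite lerDr exp_loss_ge0.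
move/le_trans/(_ prox_min_le).
have -> : w - w0 = t *: (t^-1 *: w - t^-1 *: w0).
  by rewrite -scalerBr scalerA mulfV ?gt_eqF ?scale1r.
have -> : lam * (N + t ^+ 2 / 2 * sqnorm (p - t^-1 *: w0)) =
    lam / 2 * (2 * N + t ^+ 2 * sqnorm (p - t^-1 *: w0)) by field.
by rewrite sqnormZ ler_pM2l ?divr_gt0.
Qed.

Lemma prox_scaled_margin j :
  expR (t * (1 - dot (a j) (t^-1 *: w))) <= N + t ^+ 2 / 2 * sqnorm (p - t^-1 *: w0).
Proof.
rewrite -(ler_pM2l lam_gt0); apply: le_trans prox_min_le.
have -> : lam * expR (t * (1 - dot (a j) (t^-1 *: w))) = expR (- dot (a j) w).
  by rewrite lamE -expRD dotZr; congr expR; field; rewrite gt_eqF.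
apply: le_trans (expR_le_exp_loss w j) _.
by rewrite lerDl mulr_ge0 ?divr_ge0 ?sqnorm_ge0 ?ltW.
Qed.

End ScaledMinimizer.
End ExpLoss.

Section ProximalLimit.
Variables (R : realType) (d : nat) (J : finType) (a : J -> 'rV[R]_d).
Local Notation N := (#|J|%:R : R).
Hypothesis feasible_nonempty : exists c, feasible a c.

Lemma margin_of_expR_le (t eta q B : R) : 0 < t -> 0 < eta ->
  expR (t * (1 - q)) <= B -> 6 * B < (eta * t) ^+ 3 -> 1 - eta <= q.
Proof.
move=> t_gt0 eta_gt0 le_B lt_B; rewrite leNgt; apply/negP => q_lt.
have : expR (eta * t) <= B.
  by apply: le_trans le_B; rewrite ler_expR mulrC ler_pM2l //; lra.
have := expR_ge1Dxn 2 (mulr_ge0 (ltW eta_gt0) (ltW t_gt0)).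
have -> : 3`!%:R = 6 :> R by [].
lra.
Qed.

(* [(1 - eta)^-1 *: v] is feasible and close to [v]; the obtuse-angle inequality at [p]
   then forces it to be close to [p]. *)
Lemma feasible_near_proj m v eta :
  let p := proj (feasible a) m in let E := enorm (p - m) in let V := enorm m + E + 1 in
  0 < eta <= 1 / 2 -> enorm (v - m) <= E + eta -> (forall j, 1 - eta <= dot (a j) v) ->
  enorm (v - p) <= 2 * eta * V + Num.sqrt (eta * ((2 * V + 1) * (2 * E + 2 * V + 1))).
Proof.
move=> p E V /andP[eta_gt0 eta_le] vm_le v_margin.
have E_ge0 : 0 <= E := enorm_ge0 _.
have V_ge1 : 1 <= V by rewrite /V; have := enorm_ge0 m; lra.
have v_le : enorm v <= V by have := enorm_subD v m; rewrite /V; lra.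
pose c := (1 - eta)^-1 *: v.
have Fc : feasible a c by apply: feasible_scale => //; lra.
have cv_le : enorm (c - v) <= 2 * eta * V.
  have -> : c - v = ((1 - eta)^-1 - 1) *: v by rewrite scalerBl scale1r.
  have inv_le : (1 - eta)^-1 <= 1 + 2 * eta.
    rewrite -div1r ler_pdivrMr; last lra.
    have : 0 <= eta * (1 - 2 * eta) by rewrite mulr_ge0; lra.
    lra.
  have k_ge0 : 0 <= (1 - eta)^-1 - 1 by rewrite subr_ge0 invf_ge1; lra.
  rewrite enormZ ger0_norm //; apply: le_trans (ler_wpM2l k_ge0 v_le) _.
  by rewrite ler_wpM2r; lra.
have cm_le : enorm (c - m) <= E + eta * (2 * V + 1).
  by have := enorm_distD c v m; lra.
have := feasible_proj_obtuse m feasible_nonempty Fc.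
rewrite -/p -enorm_sqr -/E => obtuse.
have cp_le : sqnorm (c - p) <= eta * ((2 * V + 1) * (2 * E + 2 * V + 1)).
  have : sqnorm (c - m) <= (E + eta * (2 * V + 1)) ^+ 2.
    by rewrite -enorm_leE ?addr_ge0 ?mulr_ge0; lra.
  have : eta * (2 * V + 1) <= 2 * V + 1 by rewrite ler_piMl; lra.
  have : 0 <= eta * (2 * V + 1) by rewrite mulr_ge0; lra.
  nra.
have := enorm_distD v c p; rewrite (enorm_distC v c).
have : enorm (c - p) <= Num.sqrt (eta * ((2 * V + 1) * (2 * E + 2 * V + 1))).
  by rewrite -[enorm _]/(Num.sqrt (sqnorm _)) ler_sqrt // mulr_ge0 ?mulr_ge0; lra.
lra.
Qed.

Section ScaledNear.
Variables (m w0 w : 'rV[R]_d) (t lam eta : R).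
Local Notation E := (enorm (proj (feasible a) m - m)).
Hypotheses (eta_gt0 : 0 < eta) (eta_le1 : eta <= 1) (lamE : lam = expR (- t)).
(* Large enough that [2 N / t^2 <= (eta / 3)^2] and [6 (N + t^2 (E + 1)^2 / 2) < (eta t)^3]. *)
Hypothesis t_big : 1 + 18 * N / eta ^+ 2 + (6 * N + 3 * (E + 1) ^+ 2) / eta ^+ 3 < t.
Hypothesis w0_near : enorm (t^-1 *: w0 - m) <= eta / 3.
Hypothesis w_min : forall v, prox_obj a w0 lam w <= prox_obj a w0 lam v.

Let E_ge0 : 0 <= E. Proof. exact: enorm_ge0. Qed.

Let T1_ge0 : 0 <= 18 * N / eta ^+ 2.
Proof. by rewrite divr_ge0 ?mulr_ge0 ?ler0n ?exprn_ge0 ?ltW. Qed.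

Let T2_ge0 : 0 <= (6 * N + 3 * (E + 1) ^+ 2) / eta ^+ 3.
Proof.
apply: divr_ge0; last exact/exprn_ge0/ltW.
by have := sqr_ge0 (E + 1); have := ler0n R #|J|; lra.
Qed.

Let t_ge1 : 1 <= t. Proof. by move: t_big (T1_ge0) (T2_ge0); lra. Qed.

Let t_gt0 : 0 < t. Proof. by have t1 := t_ge1; lra. Qed.

Let proj_feasible : feasible a (proj (feasible a) m).
Proof. by apply: proj_in => //; exact: feasible_closed. Qed.

Let proj_near : sqnorm (proj (feasible a) m - t^-1 *: w0) <= (E + eta / 3) ^+ 2.
Proof.
rewrite -enorm_leE; last by move: (ltW eta_gt0) E_ge0; lra.
have := enorm_distD (proj (feasible a) m) m (t^-1 *: w0).
by rewrite (enorm_distC m); move: w0_near; lra.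
Qed.

Lemma prox_scaled_dist_near : enorm (t^-1 *: w - m) <= E + eta.
Proof.
have dist := prox_scaled_dist_le t_gt0 lamE w_min proj_feasible.
have N_small : 18 * N < eta ^+ 2 * t ^+ 2.
  have : 18 * N / eta ^+ 2 < t ^+ 2.
    have : t <= t ^+ 2 by rewrite expr2 ler_pMr.
    by move: t_big (T2_ge0); lra.
  by rewrite ltr_pdivrMr ?exprn_gt0 //; nra.
have : sqnorm (t^-1 *: w - t^-1 *: w0) <= (E + 2 * eta / 3) ^+ 2.
  rewrite -(ler_pM2l (exprn_gt0 2 t_gt0)); apply: le_trans dist _.
  have := ler_wpM2l (sqr_ge0 t) proj_near.
  have := mulr_ge0 (sqr_ge0 t) (mulr_ge0 (ltW eta_gt0) E_ge0).
  nra.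
rewrite -enorm_leE; last by move: (ltW eta_gt0) E_ge0; lra.
by have := enorm_distD (t^-1 *: w) (t^-1 *: w0) m; move: w0_near; lra.
Qed.

Lemma prox_scaled_margin_near j : 1 - eta <= dot (a j) (t^-1 *: w).
Proof.
apply: (margin_of_expR_le t_gt0 eta_gt0 (prox_scaled_margin t_gt0 lamE w_min proj_feasible j)).
have proj_near1 : sqnorm (proj (feasible a) m - t^-1 *: w0) <= (E + 1) ^+ 2.
  apply: le_trans proj_near _; have : 0 <= E + eta / 3 by move: (ltW eta_gt0) E_ge0; lra.
  have : E + eta / 3 <= E + 1 by move: eta_le1; lra.
  nra.
have big_t : 6 * N + 3 * (E + 1) ^+ 2 < eta ^+ 3 * t.
  have : (6 * N + 3 * (E + 1) ^+ 2) / eta ^+ 3 < t by move: t_big (T1_ge0); lra.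
  by rewrite ltr_pdivrMr ?exprn_gt0 //; nra.
have : t ^+ 2 * (6 * N + 3 * (E + 1) ^+ 2) < t ^+ 2 * (eta ^+ 3 * t).
  by rewrite ltr_pM2l ?exprn_gt0.
have := ler_wpM2l (sqr_ge0 t) proj_near1.
have : 6 * N <= t ^+ 2 * (6 * N).
  have : 1 <= t ^+ 2 by have t1 := t_ge1; rewrite expr2; nra.
  by have := ler0n R #|J|; nra.
have -> : (eta * t) ^+ 3 = t ^+ 2 * (eta ^+ 3 * t) by ring.
lra.
Qed.

End ScaledNear.

Lemma near0_Nln_gt (T : R) : \forall lam \near 0^'+, 0 < lam /\ T < - ln lam.
Proof.
near=> lam; split; first by near: lam; exact: nbhs_right_gt.
rewrite ltrNr; near: lam; exact: (cvgrNyPlt _).1 (@lnNy R) (- T).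
Unshelve. all: by end_near.
Qed.

Theorem prox_scaled_cvg (w0 w : R -> 'rV[R]_d) m :
  (fun lam => (- ln lam)^-1 *: w0 lam) @ 0^'+ --> m ->
  (forall lam, 0 < lam ->
     forall v, prox_obj a (w0 lam) lam (w lam) <= prox_obj a (w0 lam) lam v) ->
  (fun lam => (- ln lam)^-1 *: w lam) @ 0^'+ --> proj (feasible a) m.
Proof.
move=> /cvg_enormP w0_cvg w_min; apply/cvg_enormP => eps eps_gt0.
pose E := enorm (proj (feasible a) m - m); pose V := enorm m + E + 1.
pose K := (2 * V + 1) * (2 * E + 2 * V + 1).
have E_ge0 : 0 <= E := enorm_ge0 _.
have V_ge1 : 1 <= V by rewrite /V; have := enorm_ge0 m; lra.
have K_gt0 : 0 < K by rewrite mulr_gt0; lra.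
pose eta := Num.min (1 / 2) (Num.min (eps / (8 * V)) ((eps / 4) ^+ 2 / K)).
have eta_gt0 : 0 < eta by rewrite !lt_min !divr_gt0 ?exprn_gt0 //; lra.
have eta_le : eta <= 1 / 2 by rewrite /eta ge_min lexx.
have etaV_le : 2 * eta * V <= eps / 4.
  have : eta <= eps / (8 * V) by rewrite /eta !ge_min lexx orbT.
  by rewrite ler_pdivlMr; nra.
have etaK_le : eta * K <= (eps / 4) ^+ 2.
  have : eta <= (eps / 4) ^+ 2 / K by rewrite /eta !ge_min lexx !orbT.
  by rewrite ler_pdivlMr.
pose T := 1 + 18 * N / eta ^+ 2 + (6 * N + 3 * (E + 1) ^+ 2) / eta ^+ 3.
near=> lam.
have [lam_gt0 t_big] : 0 < lam /\ T < - ln lam by near: lam; exact: near0_Nln_gt.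
have u_near : enorm ((- ln lam)^-1 *: w0 lam - m) < eta / 3.
  by near: lam; apply: w0_cvg; rewrite divr_gt0.
have lamE : lam = expR (- (- ln lam)) by rewrite opprK lnK.
have eta_le1 : eta <= 1 by lra.
have w_min_lam := w_min _ lam_gt0.
have v_near := prox_scaled_dist_near eta_gt0 lamE t_big (ltW u_near) w_min_lam.
have v_margin := prox_scaled_margin_near eta_gt0 eta_le1 lamE t_big (ltW u_near) w_min_lam.
apply: le_lt_trans (feasible_near_proj _ v_near v_margin) _; first by rewrite eta_gt0.
have : Num.sqrt (eta * K) <= eps / 4.
  apply: le_trans (ler_wsqrtr etaK_le) _.
  by rewrite sqrtr_sqr ger0_norm //; lra.
rewrite -/E -/V -/K; lra.
Unshelve. all: by end_near.
Qed.

End ProximalLimit.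

Section LocalGD.
Variables (R : realType) (M N d : nat).
Variables (x : 'I_M -> 'I_N -> 'rV[R]_d) (y : 'I_M -> 'I_N -> R).
Hypothesis M_gt0 : (0 < M)%N.
Hypothesis Cbar_neq0 : exists w, Cbar x y w.

Lemma local_objE i w0 lam : local_obj x y i w0 lam = prox_obj (signed_pt x y i) w0 lam.
Proof.
apply/funext => w; rewrite /local_obj /prox_obj /exp_loss enorm_sqr.
by congr (_ + _); apply: eq_bigr => j _; rewrite /signed_pt dotZl.
Qed.

Lemma local_step_min i w0 lam : 0 < lam ->
  forall v, prox_obj (signed_pt x y i) w0 lam (local_step x y i w0 lam) <=
            prox_obj (signed_pt x y i) w0 lam v.
Proof.
move=> lam_gt0; rewrite /local_step local_objE.
set F := prox_obj (signed_pt x y i) w0 lam.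
suff F_min : exists w, [set w | forall v, F w <= F v] w by exact: (xgetPex 0 F_min).
exact: prox_min_exists.
Qed.

Let Cset_closed i : enorm_closed (Cset x y i).
Proof. by rewrite Cset_feasible; apply: feasible_closed. Qed.

Let Cset_convex i : convex (Cset x y i).
Proof. by rewrite Cset_feasible; apply: feasible_convex. Qed.

Let Cset_meet : exists c, forall i, Cset x y i c.
Proof. by case: Cbar_neq0 => c Cc; exists c. Qed.

Lemma localGD_scaled_cvg K :
  (fun lam => (- ln lam)^-1 *: localGD x y lam K) @ 0^'+ -->
    iter K (avg_proj (Cset x y)) 0.
Proof.
elim: K => [|K IHK] /=.
  have -> : (fun lam => (- ln lam)^-1 *: localGD x y lam 0) = fun=> 0.
    by apply/funext => lam; rewrite /localGD scaler0.
  exact: cvg_cst.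
have -> : (fun lam => (- ln lam)^-1 *: localGD x y lam K.+1) = fun lam =>
    M%:R^-1 *: \sum_i (- ln lam)^-1 *: local_step x y i (localGD x y lam K) lam.
  by apply/funext => lam; rewrite /localGD iterS -scaler_sumr !scalerA mulrC.
apply: cvgZ; first exact: cvg_cst.
apply: (cvg_big (@add_continuous _)) => // i _.
have [c Cc] := Cset_meet.
rewrite Cset_feasible; apply: prox_scaled_cvg IHK _.
- by exists c; rewrite -Cset_feasible.
- by move=> lam lam_gt0; apply: local_step_min.
Qed.

Hypothesis N_gt0 : (0 < N)%N.

Theorem localGD_dirn_cvg : exists wbar, Cbar x y wbar /\
  exists u : nat -> 'rV[R]_d,
    (\forall K \near \oo, dirn (localGD x y lam K) @[lam --> 0^'+] --> u K) /\
    u @ \oo --> dirn wbar.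
Proof.
have [vs Cvs v_cvg] := avg_proj_iter_cvg M_gt0 Cset_closed Cset_convex Cset_meet 0.
have Cbar_vs : Cbar x y vs := Cvs.
have vs_neq0 : vs != 0.
  by move: Cbar_vs; rewrite Cbar_feasible => /(feasible_neq0 (Ordinal M_gt0, Ordinal N_gt0)).
exists vs; split => //; exists (fun K => dirn (iter K (avg_proj (Cset x y)) 0)).
split; last exact: cvg_dirn.
have /cvg_enormP/(_ _ (enorm_gt0 vs_neq0)) := v_cvg.
apply: filterS => K vK_near.
have vK_neq0 : iter K (avg_proj (Cset x y)) 0 != 0.
  by apply: contraTneq vK_near => ->; rewrite sub0r enormN ltxx.
apply: cvg_trans (cvg_dirn vK_neq0 (localGD_scaled_cvg (K := K))).
apply: near_eq_cvg; apply: filterS (near0_Nln_gt 0) => lam [_ t_gt0].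
by rewrite dirnZ ?invr_gt0.
Qed.

End LocalGD.

(** * Gradient descent on the exponential loss *)

Lemma expRN_le_quad (R : realType) (s : R) : `|s| <= 1 / 2 -> expR (- s) <= 1 - s + 2 * s ^+ 2.
Proof.
rewrite ler_norml => /andP[s_ge s_le].
have s1_gt0 : 0 < 1 + s by lra.
rewrite expRN; apply: le_trans (_ : (1 + s)^-1 <= _).
  by rewrite lef_pV2 ?posrE ?expR_gt0 // expR_ge1Dx.
rewrite -div1r ler_pdivrMr //.
have : 0 <= s ^+ 2 * (1 + 2 * s) by rewrite mulr_ge0 ?sqr_ge0 //; lra.
rewrite !expr2; nra.
Qed.

Section ExpLossGradient.
Variables (R : realType) (d : nat) (J : finType) (a : J -> 'rV[R]_d).
Local Notation N := (#|J|%:R : R).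

(* Minus the gradient of [exp_loss a]. *)
Definition exp_grad (w : 'rV[R]_d) := \sum_j expR (- dot (a j) w) *: a j.

Definition radius := 1 + \sum_j enorm (a j).

Definition gd (eta : R) t := iter t (fun w => w + eta *: exp_grad w) 0.

Lemma enorm_le_radius j : enorm (a j) <= radius.
Proof.
have rest : 0 <= \sum_(i | i != j) enorm (a i) by apply: sumr_ge0 => i _; exact: enorm_ge0.
rewrite /radius (bigD1 j) //=; lra.
Qed.

Lemma radius_gt0 : 0 < radius.
Proof. by rewrite ltr_pwDl // sumr_ge0 // => j _; apply: enorm_ge0. Qed.

Lemma exp_loss0 : exp_loss a 0 = N.
Proof.
rewrite /exp_loss (eq_bigr (fun=> 1)) => [|j _]; last by rewrite dot0r oppr0 expR0.
by rewrite sumr_const.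
Qed.

Lemma exp_loss_gt0 (j0 : J) w : 0 < exp_loss a w.
Proof. exact: lt_le_trans (expR_gt0 _) (expR_le_exp_loss a w j0). Qed.

Lemma dot_exp_grad w v : dot (exp_grad w) v = \sum_j expR (- dot (a j) w) * dot (a j) v.
Proof. by rewrite dot_suml; apply: eq_bigr => j _; rewrite dotZl. Qed.

Lemma enorm_exp_grad_le w : enorm (exp_grad w) <= radius * exp_loss a w.
Proof.
apply: le_trans (enorm_sum _) _; rewrite mulr_sumr ler_sum // => j _.
by rewrite enormZ ger0_norm ?expR_ge0 // mulrC ler_wpM2r ?expR_ge0 ?enorm_le_radius.
Qed.

Lemma exp_loss_le_dot_grad c w : feasible a c -> exp_loss a w <= dot (exp_grad w) c.
Proof.
move=> Fc; rewrite dot_exp_grad ler_sum // => j _.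
by rewrite -[X in X <= _]mulr1 ler_wpM2l ?expR_ge0 ?Fc.
Qed.

Lemma exp_loss_descent w eta : 0 < eta -> eta * radius ^+ 2 * exp_loss a w <= 1 / 2 ->
  exp_loss a (w + eta *: exp_grad w) <=
  exp_loss a w - eta * (1 - 2 * eta * radius ^+ 2 * exp_loss a w) * sqnorm (exp_grad w).
Proof.
move=> eta_gt0 eta_small; set G := exp_grad w; set L := exp_loss a w.
pose C := 2 * (radius ^+ 2 * eta ^+ 2 * sqnorm G).
have step_small j : `|dot (a j) (eta *: G)| <= 1 / 2.
  apply: le_trans (normr_dot_le _ _) _; rewrite enormZ gtr0_norm //.
  have := ler_pM (enorm_ge0 _) (enorm_ge0 _) (enorm_le_radius j) (enorm_exp_grad_le w).
  move/(ler_wpM2l (ltW eta_gt0)); rewrite -/G -/L expr2 in eta_small *; lra.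
have step_sqr j : dot (a j) (eta *: G) ^+ 2 <= radius ^+ 2 * eta ^+ 2 * sqnorm G.
  apply: le_trans (cauchy_schwarz _ _) _; rewrite sqnormZ mulrA ler_wpM2r ?sqnorm_ge0 //.
  rewrite ler_wpM2r ?sqr_ge0 // -enorm_sqr ler_pXn2r ?nnegrE ?enorm_ge0 ?enorm_le_radius //.
  exact: ltW radius_gt0.
have term j : expR (- dot (a j) (w + eta *: G)) <=
    expR (- dot (a j) w) - expR (- dot (a j) w) * dot (a j) (eta *: G) +
    expR (- dot (a j) w) * C.
  rewrite dotDr opprD expRD.
  have := ler_wpM2l (expR_ge0 (- dot (a j) w)) (expRN_le_quad (step_small j)).
  have := ler_wpM2l (expR_ge0 (- dot (a j) w)) (step_sqr j).
  rewrite /C; nra.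
apply: le_trans (ler_sum _ (fun j _ => term j)) _.
rewrite !big_split /= sumrN -mulr_suml -dot_exp_grad -/G dotZr -/(sqnorm G).
by rewrite -[\sum_j expR _]/L /C; lra.
Qed.

End ExpLossGradient.

Section MinNorm.
Variables (R : realType) (d : nat) (J : finType) (a : J -> 'rV[R]_d) (j0 : J).
Hypothesis feasible_nonempty : exists c, feasible a c.
Local Notation wst := (proj (feasible a) 0).

Lemma min_norm_in : feasible a wst.
Proof. by apply: proj_in => //; exact: feasible_closed. Qed.

Lemma min_norm_le c : feasible a c -> enorm wst <= enorm c.
Proof.
move=> Fc; rewrite enorm_leE ?enorm_ge0 // enorm_sqr.
by have := proj_min feasible_nonempty (@feasible_closed _ _ _ a) 0 Fc; rewrite !subr0.
Qed.

Lemma min_norm_neq0 : wst != 0.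
Proof. by have := min_norm_in; apply: feasible_neq0. Qed.

Lemma sqnormD_le (u v : 'rV[R]_d) : sqnorm (u + v) <= 2 * sqnorm u + 2 * sqnorm v.
Proof. by rewrite sqnormD; have := sqnorm_ge0 (u - v); rewrite sqnormB; lra. Qed.

(* [w] rescaled to margin 1 is feasible of norm [|wst| / r], so the obtuse-angle inequality
   at [wst] keeps it close to [wst]. *)
Lemma dirn_min_norm_sqr_le w r : 0 < r <= 1 -> w != 0 ->
  (forall j, r / enorm wst * enorm w <= dot (a j) w) ->
  sqnorm (dirn w - dirn wst) <= 4 * (1 - r).
Proof.
move=> /andP[r_gt0 r_le1] /enorm_gt0 w_gt0 w_margin.
have wst_gt0 := enorm_gt0 min_norm_neq0.
pose rho := r / enorm wst; have rho_gt0 : 0 < rho by rewrite divr_gt0.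
pose c := (rho * enorm w)^-1 *: w.
have Fc : feasible a c by apply: feasible_scale; [rewrite mulr_gt0 | exact: w_margin].
have [rho_neq0 w_neq0] := (lt0r_neq0 rho_gt0, lt0r_neq0 w_gt0).
have c_sqr : sqnorm c = rho ^- 2.
  by rewrite sqnormZ -enorm_sqr; field; rewrite rho_neq0 w_neq0.
have dirnE : dirn w = rho *: c.
  by rewrite scalerA /dirn; congr (_ *: _); field; rewrite rho_neq0 w_neq0.
have obtuse := feasible_proj_obtuse 0 feasible_nonempty Fc.
rewrite !subr0 c_sqr -enorm_sqr in obtuse.
have -> : dirn w - dirn wst = rho *: (c - wst) + (rho - (enorm wst)^-1) *: wst.
  by rewrite dirnE scalerBr scalerBl addrA subrK.
apply: le_trans (sqnormD_le _ _) _; rewrite !sqnormZ -[sqnorm wst]enorm_sqr.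
have -> : (rho - (enorm wst)^-1) ^+ 2 * enorm wst ^+ 2 = (1 - r) ^+ 2.
  by rewrite -exprMn mulrBl mulVf ?gt_eqF // /rho mulfVK ?gt_eqF //; ring.
have : rho ^+ 2 * sqnorm (c - wst) <= 1 - r ^+ 2.
  apply: le_trans (ler_wpM2l (sqr_ge0 rho) (_ : _ <= rho ^- 2 - enorm wst ^+ 2)) _.
    by lra.
  by rewrite mulrBr mulfV ?sqrf_eq0 ?gt_eqF // -exprMn /rho mulfVK ?gt_eqF.
nra.
Qed.

End MinNorm.

Section GradientDescent.
Variables (R : realType) (d : nat) (J : finType) (a : J -> 'rV[R]_d) (j0 : J).
Local Notation N := (#|J|%:R : R).
Local Notation Z := (radius a).
Hypothesis feasible_nonempty : exists c, feasible a c.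
Variable eta : R.
(* Keeps [eta * Z^2 * exp_loss a (w t) <= 1/4], so that [exp_loss_descent] applies at every step. *)
Hypotheses (eta_gt0 : 0 < eta) (eta_small : eta * (4 * Z ^+ 2 * N) <= 1).

Local Notation w t := (gd a eta t).
Local Notation L t := (exp_loss a (gd a eta t)).
Local Notation g t := (exp_grad a (gd a eta t)).
Local Notation wst := (proj (feasible a) 0).
Local Notation eps t := (2 * eta * Z ^+ 2 * L t).
Local Notation path t := (\sum_(s < t) eta * enorm (g s)).
Local Notation rate s := (eta * (1 - eps s) * sqnorm (g s) / L s).
Local Notation rate_sum t := (\sum_(s < t) rate s).

Let wst_gt0 : 0 < enorm wst.
Proof. exact/enorm_gt0/(min_norm_neq0 j0). Qed.

Let L_gt0 t : 0 < L t.
Proof. exact: exp_loss_gt0 j0 _. Qed.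

Lemma gdS t : w t.+1 = w t + eta *: g t.
Proof. by rewrite /gd iterS. Qed.

Let loss_small t : L t <= N -> eta * Z ^+ 2 * L t <= 1 / 4.
Proof.
move=> Lt_le; have : eta * Z ^+ 2 * L t <= eta * Z ^+ 2 * N.
  by rewrite ler_wpM2l // mulr_ge0 ?sqr_ge0 ?ltW.
by move: eta_small; rewrite -mulrA mulrCA mulrA; lra.
Qed.

Let gd_loss_step t : L t <= N -> L t.+1 <= L t - eta * (1 - eps t) * sqnorm (g t).
Proof. by move=> /loss_small Lt_small; rewrite gdS; apply: exp_loss_descent => //; lra. Qed.

Let decrease_ge0 t : L t <= N -> 0 <= eta * (1 - eps t) * sqnorm (g t).
Proof.
move=> /loss_small Lt_small.
by rewrite mulr_ge0 ?sqnorm_ge0 // mulr_ge0 ?ltW //; lra.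
Qed.

Lemma gd_loss_le t : L t <= N.
Proof.
elim: t => [|t IHt]; first by rewrite exp_loss0.
by have := gd_loss_step IHt; have := decrease_ge0 IHt; lra.
Qed.

Lemma gd_eps_le t : eps t <= 1 / 2.
Proof. by have := loss_small (gd_loss_le t); lra. Qed.

Lemma gd_loss_desc t : L t.+1 <= L t - eta * (1 - eps t) * sqnorm (g t).
Proof. exact/gd_loss_step/gd_loss_le. Qed.

Lemma gd_loss_le_grad t : L t <= enorm (g t) * enorm wst.
Proof.
exact: le_trans (exp_loss_le_dot_grad _ (min_norm_in feasible_nonempty)) (dot_le_enorm _ _).
Qed.

Lemma gd_loss_cvg0 e : 0 < e -> exists t0, forall t, (t0 <= t)%N -> L t < e.
Proof.
move=> e_gt0.
have L_noninc : nonincreasing_seq (fun t => L t).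
  apply/nonincreasing_seqP => t; have := gd_loss_desc t.
  by have := decrease_ge0 (gd_loss_le t); lra.
suff [t0 Lt0_lt] : exists t0, L t0 < e.
  by exists t0 => t t0t; exact: le_lt_trans (L_noninc _ _ t0t) Lt0_lt.
have [//|no_small] := pselect (exists t0, L t0 < e).
have L_ge t : e <= L t by rewrite leNgt; apply/negP => Lt_lt; apply: no_small; exists t.
pose q := e / enorm wst; pose c := eta / 2 * q ^+ 2.
have q_gt0 : 0 < q by rewrite divr_gt0.
have q_ge0 := ltW q_gt0.
have c_gt0 : 0 < c by rewrite mulr_gt0 ?divr_gt0 ?exprn_gt0.
have dec t : L t.+1 <= L t - c.
  have g_ge : q <= enorm (g t).
    by rewrite ler_pdivrMr // (le_trans (L_ge t)) ?gd_loss_le_grad.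
  have g_sqr : q ^+ 2 <= sqnorm (g t).
    by rewrite -enorm_sqr ler_pXn2r ?nnegrE ?enorm_ge0.
  have : q ^+ 2 / 2 <= (1 - eps t) * sqnorm (g t).
    by have := gd_eps_le t; have := sqnorm_ge0 (g t); nra.
  move/(ler_wpM2l (ltW eta_gt0)); have := gd_loss_desc t.
  by rewrite /c; lra.
have lin n : L n <= N - n%:R * c.
  elim: n => [|n IHn]; first by rewrite mul0r subr0 gd_loss_le.
  by apply: le_trans (dec n) _; rewrite -natr1 mulrDl mul1r; lra.
pose T := (Num.Def.truncn (N / c)).+1.
have : N < T%:R * c by rewrite -ltr_pdivrMr // truncnS_gt.
by have := lin T; have := L_gt0 T; lra.
Qed.

Lemma enorm_gd_le t : enorm (w t) <= path t.
Proof.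
elim: t => [|t IHt]; first by rewrite /gd enorm0 big_ord0.
rewrite gdS big_ord_recr /=; apply: le_trans (enormD _ _) _.
by rewrite enormZ gtr0_norm // lerD2r.
Qed.

Lemma gd_path_unbounded B : exists t, B <= path t.
Proof.
have Z_gt0 := radius_gt0 a.
have [t0 Lt0_lt] := gd_loss_cvg0 (expR_gt0 (- (Z * B))).
exists t0; have := Lt0_lt t0 (leqnn _).
apply: contraTle => path_lt; rewrite -leNgt; apply: le_trans (expR_le_exp_loss a _ j0).
rewrite ler_expR lerN2; apply: le_trans (dot_le_enorm _ _) _.
apply: ler_pM; rewrite ?enorm_ge0 ?enorm_le_radius //.
exact: le_trans (enorm_gd_le t0) (ltW path_lt).
Qed.

Lemma gd_loss_le_exp t : L t <= N * expR (- rate_sum t).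
Proof.
elim: t => [|t IHt]; first by rewrite big_ord0 oppr0 expR0 mulr1 gd_loss_le.
rewrite big_ord_recr /= opprD expRD mulrA.
apply: le_trans (gd_loss_desc t) _.
have -> : L t - eta * (1 - eps t) * sqnorm (g t) = L t * (1 - rate t).
  by field; rewrite gt_eqF.
apply: le_trans (ler_wpM2l (ltW (L_gt0 t)) (_ : 1 - rate t <= expR (- rate t))) _.
  exact: expR_ge1Dx.
by rewrite ler_wpM2r ?expR_ge0.
Qed.

Lemma gd_margin_lower t j : rate_sum t - N <= dot (a j) (w t).
Proof.
have le_N := le_trans (expR_le_exp_loss a (w t) j) (gd_loss_le_exp t).
have : expR (rate_sum t - dot (a j) (w t)) <= N.
  rewrite expRD mulrC; apply: le_trans (ler_wpM2r (expR_ge0 _) le_N) _.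
  by rewrite -[Y in Y <= _]mulrA -expRD addNr expR0 mulr1.
by have := expR_ge1Dx (rate_sum t - dot (a j) (w t)); lra.
Qed.

Lemma gd_rate_lower s : (1 - eps s) * (eta * enorm (g s)) / enorm wst <= rate s.
Proof.
have g_ge : L s / enorm wst <= enorm (g s) by rewrite ler_pdivrMr ?gd_loss_le_grad.
have k_ge0 : 0 <= eta * (1 - eps s) * enorm (g s).
  by rewrite mulr_ge0 ?enorm_ge0 // mulr_ge0 ?ltW //; have := gd_eps_le s; lra.
have := ler_wpM2l k_ge0 g_ge; rewrite -enorm_sqr.
have -> : eta * (1 - eps s) * enorm (g s) * (L s / enorm wst) =
    (1 - eps s) * (eta * enorm (g s)) / enorm wst * L s by ring.
by rewrite -ler_pdivlMr // mulrAC expr2 !mulrA.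
Qed.

Lemma gd_path_nondecr : nondecreasing_seq (fun t => path t).
Proof.
apply/nondecreasing_seqP => t; rewrite big_ord_recr /= lerDl.
by rewrite mulr_ge0 ?enorm_ge0 ?ltW.
Qed.

Lemma gd_rate_sum_lower t0 n e : (forall s, (t0 <= s)%N -> eps s <= e) ->
  (1 - e) * (path (t0 + n) - path t0) / enorm wst <= rate_sum (t0 + n).
Proof.
move=> eps_le; elim: n => [|n IHn].
  rewrite addn0 subrr mulr0 mul0r sumr_ge0 // => s _.
  apply: le_trans (gd_rate_lower s).
  rewrite divr_ge0 ?enorm_ge0 // mulr_ge0 ?mulr_ge0 ?enorm_ge0 ?ltW //.
  by have := gd_eps_le s; lra.
rewrite addnS !big_ord_recr /=.
have : (1 - e) * (eta * enorm (g (t0 + n))) / enorm wst <= rate (t0 + n).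
  apply: le_trans (gd_rate_lower _); rewrite ler_pM2r ?invr_gt0 //.
  apply: ler_wpM2r; first by rewrite mulr_ge0 ?enorm_ge0 // ltW.
  by rewrite lerD2l lerN2 eps_le // leq_addr.
move: IHn; set P := path (t0 + n); set P0 := path t0; set q := eta * enorm _.
rewrite ?mulrDr ?mulrBr ?mulrDl ?mulrBl; lra.
Qed.

Lemma gd_margin_ratio e : 0 < e <= 1 / 4 ->
  \forall t \near \oo, w t != 0 /\
    forall j, (1 - 2 * e) / enorm wst * enorm (w t) <= dot (a j) (w t).
Proof.
move=> /andP[e_gt0 e_le].
have [t0 eps_small] : exists t0, forall s, (t0 <= s)%N -> eps s <= e.
  have k_gt0 : 0 < 2 * eta * Z ^+ 2 by rewrite !mulr_gt0 ?exprn_gt0 ?radius_gt0.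
  have [t0 L_small] := gd_loss_cvg0 (divr_gt0 e_gt0 k_gt0).
  exists t0 => s t0s; have := L_small s t0s; rewrite ltr_pdivlMr //.
  by rewrite mulrC => /ltW.
pose W := enorm wst; pose P0 := path t0.
have P0_ge0 : 0 <= P0 by apply: sumr_ge0 => s _; rewrite mulr_ge0 ?enorm_ge0 ?ltW.
have [t1 Pt1] := gd_path_unbounded ((P0 + N * W) / e).
exists (maxn t0 t1) => // t /=; rewrite geq_max => /andP[t0t t1t].
have P_ge : (P0 + N * W) / e <= path t := le_trans Pt1 (gd_path_nondecr t1t).
have rate_sum_ge := gd_rate_sum_lower (t - t0) eps_small.
rewrite subnKC // -/P0 -/W in rate_sum_ge.
have eP_ge : P0 + N * W <= path t * e by rewrite -ler_pdivrMr.
have W_gt0 : 0 < W := wst_gt0.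
have P_gt0 : 0 < path t.
  have NW_gt0 : 0 < N * W by rewrite mulr_gt0 // -(exp_loss0 a) (exp_loss_gt0 _ j0).
  by apply: lt_le_trans P_ge; apply: divr_gt0 => //; lra.
have margin j : (1 - 2 * e) / W * path t <= dot (a j) (w t).
  apply: le_trans (gd_margin_lower t j); apply: le_trans _ (lerB rate_sum_ge (lexx _)).
  have : (1 - 2 * e) * path t <= (1 - e) * (path t - P0) - N * W.
    by have := mulr_ge0 (ltW e_gt0) P0_ge0; lra.
  have -> : (1 - e) * (path t - P0) / W - N = ((1 - e) * (path t - P0) - N * W) / W.
    by field; rewrite gt_eqF.
  by rewrite mulrAC ler_pM2r ?invr_gt0.
have coef_gt0 : 0 < (1 - 2 * e) / W by rewrite divr_gt0 //; lra.
split.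
  apply/eqP => w_eq0; have := margin j0; rewrite w_eq0 dot0r leNgt.
  by rewrite mulr_gt0.
move=> j; apply: le_trans (margin j).
by rewrite ler_wpM2l ?enorm_gd_le ?ltW.
Qed.

Theorem gd_dirn_cvg : dirn (w t) @[t --> \oo] --> dirn wst.
Proof.
apply/cvg_enormP => e' e'_gt0.
pose e := Num.min (1 / 4) (e' ^+ 2 / 16).
have e_gt0 : 0 < e.
  by rewrite lt_min; apply/andP; split; apply: divr_gt0 => //; exact: exprn_gt0.
have e_le : e <= 1 / 4 by rewrite ge_min lexx.
have e_small : e <= e' ^+ 2 / 16 by rewrite ge_min lexx orbT.
apply: filterS (gd_margin_ratio (e := e) _); last by rewrite e_gt0.
move=> t [w_neq0 w_margin]; rewrite enorm_ltE ?ltW //.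
apply: le_lt_trans (dirn_min_norm_sqr_le j0 feasible_nonempty _ w_neq0 w_margin) _.
  by apply/andP; split; lra.
have : 0 < e' ^+ 2 by rewrite exprn_gt0.
lra.
Qed.

End GradientDescent.

Section Centralized.
Variables (R : realType) (M N d : nat).
Variables (x : 'I_M -> 'I_N -> 'rV[R]_d) (y : 'I_M -> 'I_N -> R).
Local Notation a := (fun p : 'I_M * 'I_N => signed_pt x y p.1 p.2).

Lemma central_gradE w : central_grad x y w = - exp_grad a w.
Proof.
rewrite /central_grad /exp_grad pair_bigA -sumrN; apply: eq_bigr => -[i j] _ /=.
by rewrite /signed_pt dotZl scalerA scaleNr.
Qed.

Lemma centralGDE eta t : centralGD x y eta t = gd a eta t.
Proof.
by rewrite /centralGD /gd; elim: t => //= t ->; rewrite central_gradE scalerN opprK.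
Qed.

End Centralized.

Theorem theorem2 (R : realType) (M N d : nat) (HM : (0 < M)%N) (HN : (0 < N)%N)
  (Hd : (0 < d)%N) (y : 'I_M -> 'I_N -> R)
  (Hy : forall i j, y i j = 1 \/ y i j = -1) :
  exists E : set ('I_M * 'I_N * 'I_d -> R),
    lebesgue_null E /\
    forall z : 'I_M * 'I_N * 'I_d -> R, ~ E z ->
      let x := data_of z in
      (forall i, exists w, Cset x y i w) ->
      (exists w, Cbar x y w) ->
      (* Local-GD: lim_{K -> oo} lim_{lam -> 0+} w_0^K(lam)/||w_0^K(lam)|| = wbar/||wbar|| *)
      (exists wbar, Cbar x y wbar /\
        exists u : nat -> 'rV[R]_d,
          (\forall K \near \oo,
             dirn (localGD x y lam K) @[lam --> 0^'+] --> u K) /\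
          u @ \oo --> dirn wbar) /\
      (* centralized GD: converges in direction to the min-norm point of Cbar *)
      (exists wstar, Cbar x y wstar /\
         (forall w, Cbar x y w -> enorm wstar <= enorm w) /\
         exists eta0 : R, 0 < eta0 /\
           forall eta : R, 0 < eta -> eta < eta0 ->
             dirn (centralGD x y eta t) @[t --> \oo] --> dirn wstar).
Proof.
exists set0; split.
  move=> eps eps_gt0; exists (fun _ _ => 0), (fun _ _ => 0); split=> //; split=> // n.
  rewrite big1 ?ltW // => k _.
  by rewrite (bigD1 (Ordinal HM, Ordinal HN, Ordinal Hd)) //= subrr mul0r.
move=> z _ x _ Cbar_neq0; split; first exact: localGD_dirn_cvg.
pose a := fun p : 'I_M * 'I_N => signed_pt x y p.1 p.2.
have j0 : 'I_M * 'I_N := (Ordinal HM, Ordinal HN).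
have feasible_nonempty : exists c, feasible a c by rewrite -Cbar_feasible.
exists (proj (feasible a) 0); rewrite Cbar_feasible.
split; first exact: min_norm_in.
split; first exact: min_norm_le.
have eta0_gt0 : 0 < 4 * radius a ^+ 2 * #|{: 'I_M * 'I_N}|%:R.
  by rewrite !mulr_gt0 ?exprn_gt0 ?radius_gt0 // -(exp_loss0 a) (exp_loss_gt0 _ j0).
exists (4 * radius a ^+ 2 * #|{: 'I_M * 'I_N}|%:R)^-1; split; first by rewrite invr_gt0.
move=> eta eta_gt0 eta_lt.
have -> : (fun t => dirn (centralGD x y eta t)) = fun t => dirn (gd a eta t).
  by apply/funext => t; rewrite centralGDE.
apply: (gd_dirn_cvg j0 feasible_nonempty eta_gt0).
by rewrite -ler_pdivlMr // div1r ltW.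
Qed.
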